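(* Fix $m\ge1$, $n\ge0$ and $i\in Ag$. Every labelled sequent derivable in $\mathsf{G3Ldm}_{n}^{m}+\mathsf{PR}$ is derivable in $\mathsf{G3Ldm}_{n}^{m}+\mathsf{PR}$ without any use of the rule $(\mathsf{eucl}_i)$.
   Context: Language. $Ag=\{1,\dots,m\}$, $Var$ a countable set of propositional variables; formulas $\phi ::= p \mid \overline{p} \mid (\phi\wedge\phi) \mid (\phi\vee\phi) \mid \Box\phi \mid \Diamond\phi \mid [i]\phi \mid \langle i\rangle\phi$. Labelled sequents $\mathcal{R},\Gamma$: $\mathcal{R}$ a multiset of relational atoms $\mathcal{R}_ixy$, $\Gamma$ a multiset of labelled formulas $x:\phi$. Derivations are finite trees whose leaves are $(\mathsf{id})$ instances. Rules of $\mathsf{G3Ldm}_{n}^{m}$ (premise(s) / conclusion): $(\mathsf{id})$: / $\mathcal{R}, w:p, w:\overline{p},\Gamma$. $(\wedge)$: $\mathcal{R}, w:\phi\wedge\psi, w:\phi,\Gamma$ and $\mathcal{R}, w:\phi\wedge\psi, w:\psi,\Gamma$ / $\mathcal{R}, w:\phi\wedge\psi,\Gamma$. $(\vee)$: $\mathcal{R}, w:\phi\vee\psi, w:\phi, w:\psi,\Gamma$ / $\mathcal{R}, w:\phi\vee\psi,\Gamma$. $([i])$: $\mathcal{R},\mathcal{R}_iwv, v:\phi,\Gamma$ / $\mathcal{R}, w:[i]\phi,\Gamma$ ($v$ fresh). $(\Box)$: $\mathcal{R}, w:\Box\phi, v:\phi,\Gamma$ / $\mathcal{R}, w:\Box\phi,\Gamma$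 ($v$ fresh). $(\Diamond)$: $\mathcal{R}, w:\Diamond\phi, u:\phi,\Gamma$ / $\mathcal{R}, w:\Diamond\phi,\Gamma$. $(\mathsf{IOA})$: $\mathcal{R},\mathcal{R}_1u_1v,\dots,\mathcal{R}_mu_mv,\Gamma$ / $\mathcal{R},\Gamma$ ($v$ fresh). $(\langle i\rangle)$: $\mathcal{R},\mathcal{R}_iwu, w:\langle i\rangle\phi, u:\phi,\Gamma$ / $\mathcal{R},\mathcal{R}_iwu, w:\langle i\rangle\phi,\Gamma$. $(\mathsf{refl}_i)$: $\mathcal{R},\mathcal{R}_iww,\Gamma$ / $\mathcal{R},\Gamma$. $(\mathsf{eucl}_i)$: $\mathcal{R},\mathcal{R}_iwu,\mathcal{R}_iwv,\mathcal{R}_iuv,\Gamma$ / $\mathcal{R},\mathcal{R}_iwu,\mathcal{R}_iwv,\Gamma$. $(\mathsf{APC}^i_n)$ (only if $n>0$): premises $\mathcal{R},\mathcal{R}_iw_kw_j,\Gamma$ for all $0\le k\le n-1$, $k+1\le j\le n$ / $\mathcal{R},\Gamma$. ''Fresh'' means not occurring in the conclusion. One copy of the indexed rules for each agent. $\mathsf{G3Ldm}_{n}^{m}+\mathsf{PR}$ adds, for each $i\in Ag$, the propagation rule $(\mathsf{Pr}_i)$: $\mathcal{R}, w:\langle i\rangle\phi, u:\phi,\Gamma$ / $\mathcal{R}, w:\langle i\rangle\phi,\Gamma$, applicable only if $w=u$ or there are labels $w=z_0,\dots,z_k=u$ ($k\ge1$) with $\mathcal{R}_iz_lz_{l+1}\in\mathcal{R}$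 or $\mathcal{R}_iz_{l+1}z_l\in\mathcal{R}$ for each $l<k$. *)

From Stdlib Require Import List Permutation Arith Lia Relations.
Import ListNotations.

Inductive formula : Type :=
| Var  : nat -> formula
| NVar : nat -> formula
| And  : formula -> formula -> formula
| Or   : formula -> formula -> formula
| Box  : formula -> formula             (* settled true *)
| Dia  : formula -> formula
| Stit : nat -> formula -> formula
| Poss : nat -> formula -> formula.

Record relatom : Type := Rel { ragent : nat; rsrc : nat; rtgt : nat }.

Definition lform : Type := (nat * formula)%type.

Fixpoint fagents (A : formula) : list nat :=
  match A with
  | Var _ | NVar _ => []
  | And A B | Or A B => fagents A ++ fagents B
  | Box A | Dia A => fagents A
  | Stit i A | Poss i A => i :: fagents A
  end.

Definition agent_ok (m i : nat) : Prop := 1 <= i <= m.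

Definition wf_sequent (m : nat) (R : list relatom) (G : list lform) : Prop :=
  (forall a, In a R -> agent_ok m (ragent a)) /\
  (forall x A i, In (x, A) G -> In i (fagents A) -> agent_ok m i).

Definition occurs (v : nat) (R : list relatom) (G : list lform) : Prop :=
  (exists a, In a R /\ (rsrc a = v \/ rtgt a = v)) \/
  (exists A, In (v, A) G).

Definition istep (i : nat) (R : list relatom) (x y : nat) : Prop :=
  In (Rel i x y) R \/ In (Rel i y x) R.

Definition ipath (i : nat) (R : list relatom) : nat -> nat -> Prop :=
  clos_refl_trans nat (istep i R).

(* Derivability in G3Ldm_n^m + PR, where the euclidean rule (eucl_j) is
   available exactly for the agents j with [E j].  Sequents are multisets,
   represented by lists; [d_exch] makes derivability invariant under
   reordering (i.e. it identifies lists with the same multiset). *)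
Inductive deriv (m n : nat) (E : nat -> Prop)
  : list relatom -> list lform -> Prop :=
| d_exch R R' G G' :
    Permutation R R' -> Permutation G G' ->
    deriv m n E R G -> deriv m n E R' G'
| d_id R G w p :
    deriv m n E R ((w, Var p) :: (w, NVar p) :: G)
| d_and R G w A B :
    deriv m n E R ((w, And A B) :: (w, A) :: G) ->
    deriv m n E R ((w, And A B) :: (w, B) :: G) ->
    deriv m n E R ((w, And A B) :: G)
| d_or R G w A B :
    deriv m n E R ((w, Or A B) :: (w, A) :: (w, B) :: G) ->
    deriv m n E R ((w, Or A B) :: G)
| d_stit R G i w v A :
    agent_ok m i ->
    ~ occurs v R ((w, Stit i A) :: G) ->
    deriv m n E (Rel i w v :: R) ((v, A) :: G) ->
    deriv m n E R ((w, Stit i A) :: G)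
| d_box R G w v A :
    ~ occurs v R ((w, Box A) :: G) ->
    deriv m n E R ((w, Box A) :: (v, A) :: G) ->
    deriv m n E R ((w, Box A) :: G)
| d_dia R G w u A :
    deriv m n E R ((w, Dia A) :: (u, A) :: G) ->
    deriv m n E R ((w, Dia A) :: G)
| d_ioa R G (u : nat -> nat) v :
    ~ occurs v R G ->
    deriv m n E (map (fun j => Rel j (u j) v) (seq 1 m) ++ R) G ->
    deriv m n E R G
| d_poss R G i w u A :
    agent_ok m i ->
    deriv m n E (Rel i w u :: R) ((w, Poss i A) :: (u, A) :: G) ->
    deriv m n E (Rel i w u :: R) ((w, Poss i A) :: G)
| d_refl R G i w :
    agent_ok m i ->
    deriv m n E (Rel i w w :: R) G ->
    deriv m n E R G
| d_eucl R G i w u v :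
    agent_ok m i -> E i ->
    deriv m n E (Rel i w u :: Rel i w v :: Rel i u v :: R) G ->
    deriv m n E (Rel i w u :: Rel i w v :: R) G
| d_apc R G i (w : nat -> nat) :
    0 < n -> agent_ok m i ->
    (forall k j, k < j -> j <= n -> deriv m n E (Rel i (w k) (w j) :: R) G) ->
    deriv m n E R G
| d_pr R G i w u A :
    agent_ok m i ->
    ipath i R w u ->
    deriv m n E R ((w, Poss i A) :: (u, A) :: G) ->
    deriv m n E R ((w, Poss i A) :: G).

(* The only rules that inspect relational atoms of agent i are (<i>), (Pr_i)
   and (eucl_i); the first two only need the endpoints of the atom to be
   R_i-connected.  Hence once (eucl_i) is absent, an atom R_i u v whose
   endpoints are already R_i-connected can be deleted from any derivable
   sequent.  The atom R_i u v added by (eucl_i) is of this kind, being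
   connected through R_i w u and R_i w v, so every (eucl_i) step can be
   dropped, bottom-up. *)

From Stdlib Require Import List Permutation Arith Relations.
Import ListNotations.

Lemma occurs_incl v R R' G : incl R R' -> occurs v R G -> occurs v R' G.
Proof.
  intros Hincl [[a [Ha Hv]] | HG].
  - left; exists a; auto.
  - right; exact HG.
Qed.

Lemma ipath_incl i R R' x y : incl R R' -> ipath i R x y -> ipath i R' x y.
Proof.
  intros Hincl Hp; induction Hp as [x y [Hxy | Hyx] | x | x y z _ IHxy _ IHyz].
  - apply rt_step; left; auto.
  - apply rt_step; right; auto.
  - apply rt_refl.
  - eapply rt_trans; eauto.
Qed.

Lemma ipath_sym i R x y : ipath i R x y -> ipath i R y x.
Proof.
  intros Hp; induction Hp as [x y [Hxy | Hyx] | x | x y z _ IHxy _ IHyz].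
  - apply rt_step; right; auto.
  - apply rt_step; left; auto.
  - apply rt_refl.
  - eapply rt_trans; eauto.
Qed.

Lemma Permutation_cons2_of_In (A : Type) (a b : A) (l : list A) :
  In a l -> In b l -> a <> b -> exists l', Permutation l (a :: b :: l').
Proof.
  intros Ha Hb Hab.
  destruct (in_split _ _ Ha) as [l1 [l2 ->]].
  assert (Hb' : In b (l1 ++ l2)).
  { apply in_app_or in Hb; apply in_or_app.
    destruct Hb as [Hb | [Hba | Hb]]; auto; congruence. }
  destruct (in_split _ _ Hb') as [l3 [l4 Hl]].
  exists (l3 ++ l4).
  rewrite <- Permutation_middle, Hl, <- Permutation_middle.
  reflexivity.
Qed.

(* The inclusion [incl R0 R1] keeps labels that are fresh for [R1] fresh
   for [R0]. *)
Definition redundant_ext (i : nat) (R0 R1 : list relatom) : Prop :=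
  incl R0 R1 /\
  forall a, In a R1 -> In a R0 \/ (ragent a = i /\ ipath i R0 (rsrc a) (rtgt a)).

Lemma redundant_ext_app i l R0 R1 :
  redundant_ext i R0 R1 -> redundant_ext i (l ++ R0) (l ++ R1).
Proof.
  intros [Hincl Hred]; split.
  - apply incl_app; [apply incl_appl | apply incl_appr]; auto using incl_refl.
  - intros a Ha; apply in_app_or in Ha as [Ha | Ha].
    + left; apply in_or_app; auto.
    + destruct (Hred a Ha) as [Ha0 | [Hag Hp]].
      * left; apply in_or_app; auto.
      * right; split; [exact Hag |].
        apply (ipath_incl _ R0); [apply incl_appr, incl_refl | exact Hp].
Qed.

Lemma redundant_ext_cons i a R0 R1 :
  redundant_ext i R0 R1 -> redundant_ext i (a :: R0) (a :: R1).
Proof. exact (redundant_ext_app i [a] R0 R1). Qed.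

Lemma redundant_ext_incl i R0 R0' R1 R1' :
  incl R0 R0' -> incl R0' R0 -> incl R1 R1' -> incl R1' R1 ->
  redundant_ext i R0 R1 -> redundant_ext i R0' R1'.
Proof.
  intros H00' H0'0 H11' H1'1 [Hincl Hred]; split.
  - intros a Ha; apply H11', Hincl, H0'0, Ha.
  - intros a Ha; destruct (Hred a (H1'1 a Ha)) as [H0 | [Hag Hp]].
    + left; apply H00', H0.
    + right; split; [exact Hag | exact (ipath_incl _ _ _ _ _ H00' Hp)].
Qed.

Lemma redundant_ext_perm i R0 R1 R1' :
  Permutation R1 R1' -> redundant_ext i R0 R1 -> redundant_ext i R0 R1'.
Proof.
  intros HP; apply redundant_ext_incl; try apply incl_refl;
    intros a; apply Permutation_in; [exact HP | apply Permutation_sym, HP].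
Qed.

Lemma redundant_ext_ipath i j R0 R1 x y :
  redundant_ext i R0 R1 -> ipath j R1 x y -> ipath j R0 x y.
Proof.
  intros [_ Hred] Hp.
  induction Hp as [x y Hstep | x | x y z _ IHxy _ IHyz].
  - destruct Hstep as [Hxy | Hyx].
    + destruct (Hred _ Hxy) as [H0 | [Hag Hp]].
      * apply rt_step; left; exact H0.
      * simpl in Hag; subst; exact Hp.
    + destruct (Hred _ Hyx) as [H0 | [Hag Hp]].
      * apply rt_step; right; exact H0.
      * simpl in Hag; subst; apply ipath_sym, Hp.
  - apply rt_refl.
  - eapply rt_trans; eauto.
Qed.

Lemma redundant_ext_In_other i j R0 R1 x y :
  j <> i -> redundant_ext i R0 R1 -> In (Rel j x y) R1 -> In (Rel j x y) R0.
Proof.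
  intros Hji [_ Hred] Hin.
  destruct (Hred _ Hin) as [H0 | [Hag _]]; [exact H0 | simpl in Hag; congruence].
Qed.

Section RedundantAtoms.

Variables (m n i : nat) (E : nat -> Prop).
Hypothesis no_eucl_i : ~ E i.

(* When [u = v] the smaller context may hold a single copy of R_j w u, so
   (eucl_j) cannot be replayed; its new atom R_j u u comes from (refl_j). *)
Lemma deriv_eucl_redundant_ext R0 R G j w u v :
  agent_ok m j -> E j ->
  redundant_ext i R0 (Rel j w u :: Rel j w v :: R) ->
  (forall R0', redundant_ext i R0' (Rel j w u :: Rel j w v :: Rel j u v :: R) ->
               deriv m n E R0' G) ->
  deriv m n E R0 G.
Proof.
  intros Hj HEj Hext IH.
  assert (Hji : j <> i) by (intros ->; contradiction).
  assert (Hu : In (Rel j w u) R0)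
    by (apply (redundant_ext_In_other i j R0 _ w u Hji Hext); left; reflexivity).
  assert (Hv : In (Rel j w v) R0)
    by (apply (redundant_ext_In_other i j R0 _ w v Hji Hext); right; left; reflexivity).
  assert (Hext' : redundant_ext i (Rel j u v :: R0)
                    (Rel j w u :: Rel j w v :: Rel j u v :: R)).
  { apply (redundant_ext_incl i (Rel j u v :: R0) _ (Rel j u v :: Rel j w u :: Rel j w v :: R));
      try apply incl_refl; [intros a Ha; simpl in *; tauto .. |].
    apply redundant_ext_cons, Hext. }
  destruct (Nat.eq_dec u v) as [<- | Huv].
  - exact (d_refl _ _ _ _ _ j u Hj (IH _ Hext')).
  - assert (Hneq : Rel j w u <> Rel j w v) by congruence.
    destruct (Permutation_cons2_of_In _ _ _ _ Hu Hv Hneq) as [R0'' HP].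
    apply (d_exch _ _ _ (Rel j w u :: Rel j w v :: R0'') _ G G);
      [apply Permutation_sym, HP | apply Permutation_refl |].
    apply d_eucl; [exact Hj | exact HEj |].
    apply IH.
    assert (HP' : Permutation (Rel j u v :: R0)
                    (Rel j w u :: Rel j w v :: Rel j u v :: R0'')).
    { rewrite HP. apply Permutation_sym.
      change (Permutation ([Rel j w u; Rel j w v] ++ Rel j u v :: R0'')
                          (Rel j u v :: [Rel j w u; Rel j w v] ++ R0'')).
      apply Permutation_sym, Permutation_middle. }
    refine (redundant_ext_incl _ _ _ _ _ _ _ (incl_refl _) (incl_refl _) Hext');
      intros a; apply Permutation_in; [exact HP' | apply Permutation_sym, HP'].
Qed.

Lemma deriv_redundant_ext R1 G :
  deriv m n E R1 G -> forall R0, redundant_ext i R0 R1 -> deriv m n E R0 G.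
Proof.
  intros D; induction D as
    [R R' G G' HR HG D IH | R G w p | R G w A B D1 IH1 D2 IH2 | R G w A B D IH
    | R G j w v A Hj Hfresh D IH | R G w v A Hfresh D IH | R G w u A D IH
    | R G u v Hfresh D IH | R G j w u A Hj D IH | R G j w Hj D IH
    | R G j w u v Hj HEj D IH | R G j w Hn Hj D IH | R G j w u A Hj Hp D IH];
    intros R0 Hext.
  - apply (d_exch _ _ _ R0 R0 G G'); [apply Permutation_refl | exact HG |].
    apply IH, (redundant_ext_perm _ _ R'); [apply Permutation_sym, HR | exact Hext].
  - apply d_id.
  - apply d_and; auto.
  - apply d_or; auto.
  - apply (d_stit _ _ _ _ _ j w v); [exact Hj | | apply IH, redundant_ext_cons, Hext].
    intros Hocc; apply Hfresh, (occurs_incl _ R0); [apply Hext | exact Hocc].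
  - apply (d_box _ _ _ _ _ w v); [| apply IH, Hext].
    intros Hocc; apply Hfresh, (occurs_incl _ R0); [apply Hext | exact Hocc].
  - apply (d_dia _ _ _ _ _ w u), IH, Hext.
  - apply (d_ioa _ _ _ _ _ u v); [| apply IH, redundant_ext_app, Hext].
    intros Hocc; apply Hfresh, (occurs_incl _ R0); [apply Hext | exact Hocc].
  - apply (d_pr _ _ _ _ _ j w u); [exact Hj | | apply IH, Hext].
    apply (redundant_ext_ipath i j R0 (Rel j w u :: R)); [exact Hext |].
    apply rt_step; left; left; reflexivity.
  - apply (d_refl _ _ _ _ _ j w Hj), IH, redundant_ext_cons, Hext.
  - exact (deriv_eucl_redundant_ext R0 R G j w u v Hj HEj Hext IH).
  - apply (d_apc _ _ _ _ _ j w Hn Hj); intros k l Hkl Hl.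
    apply (IH k l Hkl Hl), redundant_ext_cons, Hext.
  - apply (d_pr _ _ _ _ _ j w u); [exact Hj | | apply IH, Hext].
    exact (redundant_ext_ipath _ _ _ _ _ _ Hext Hp).
Qed.

End RedundantAtoms.

Lemma redundant_ext_eucl i w u v R :
  redundant_ext i (Rel i w u :: Rel i w v :: R)
                  (Rel i w u :: Rel i w v :: Rel i u v :: R).
Proof.
  split.
  - intros a Ha; simpl in *; tauto.
  - intros a [<- | [<- | [<- | Ha]]]; simpl; auto.
    right; split; [reflexivity |].
    apply (rt_trans _ _ _ w); apply rt_step;
      [right; left | left; right; left]; reflexivity.
Qed.

Lemma deriv_eucl_admissible m n (E E' : nat -> Prop) i R G :
  (forall j, E j -> E' j \/ j = i) -> ~ E' i ->
  deriv m n E R G -> deriv m n E' R G.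
Proof.
  intros HE Hi D; induction D as
    [ | | | | | | | | | | R G j w u v Hj HEj D IH | | ];
    try (econstructor; eauto; fail).
  - destruct (HE j HEj) as [HE'j | ->].
    + apply d_eucl; auto.
    + exact (deriv_redundant_ext m n i E' Hi _ _ IH _ (redundant_ext_eucl i w u v R)).
Qed.

Theorem lemma3 (m n i : nat) (R : list relatom) (G : list lform) :
  1 <= m -> agent_ok m i -> wf_sequent m R G ->
  deriv m n (fun _ => True) R G ->
  deriv m n (fun j => j <> i) R G.
Proof.
  intros _ _ _.
  apply (deriv_eucl_admissible m n (fun _ => True) (fun j => j <> i) i).
  - intros j _; destruct (Nat.eq_dec j i); auto.
  - tauto.
Qed.
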